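(* Let $L$ be a number field, $\Gamma$ an order of $L$, $K\subseteq L$ a subfield with ring of integers $\mathcal O_K$ and $n=[L:K]$, and $\varphi:K\to L$ a ring morphism. Then there exists an injection $J_\varphi\hookrightarrow C_\Gamma$.
   Context: Fix a positive integer $z$ with $\varphi(z\mathcal O_K)\subseteq\Gamma$, let $\mathcal O'=\mathbb Z[z\mathcal O_K]$; via $\varphi|_{\mathcal O'}:\mathcal O'\to\Gamma$ each $\Gamma$-module $X$ becomes an $\mathcal O'$-module $X|_{\mathcal O'}$, and $\mathcal O_K^n|_{\mathcal O'}$ denotes $\mathcal O_K^n$ with $\mathcal O'$ acting by multiplication. $J_\varphi$ is the set of isomorphism classes of $\Gamma$-modules $X$ with $X|_{\mathcal O'}\cong\mathcal O_K^n|_{\mathcal O'}$. A fractional ideal of $\Gamma$ is a nonzero $\Gamma$-submodule $I\subseteq L$ with $xI\subseteq\Gamma$ for some nonzero $x\in L$; two are equivalent if $I'=xI$ for some nonzero $x\in L$; $C_\Gamma$ is the set of equivalence classes (a commutative monoid under ideal multiplication). *)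

From HB Require Import structures.
From mathcomp Require Import all_boot all_order all_algebra all_field.
Set Implicit Arguments. Unset Strict Implicit. Unset Printing Implicit Defensive.
Import Order.TTheory GRing.Theory Num.Theory.
Local Open Scope ring_scope.

(* A number field is modelled as L : fieldExtType rat (finite dimensional over Q). *)

Definition integral_over_Z (R : comNzRingType) (x : R) : Prop :=
  exists p : {poly int}, p \is monic /\ (map_poly intr p).[x] = 0.

Definition ring_of_integers (L : fieldExtType rat) (K : {subfield L})
  (a : subvs_of K) : Prop := integral_over_Z a.

Definition is_order (L : fieldExtType rat) (G : {pred L}) : Prop :=
  [/\ 1 \in G,
      (forall x y, x \in G -> y \in G -> x - y \in G),
      (forall x y, x \in G -> y \in G -> x * y \in G) &
      exists s : seq L,
        (forall x, x \in G <-> exists c : 'I_(size s) -> int,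
                              x = \sum_(i < size s) (s`_i *~ c i)) /\
        <<s>>%VS = fullv].

(* A module over the order G (with G viewed inside L): an abelian group
   with an action of L, of which only the action of elements of G matters. *)
Record GMod (L : fieldExtType rat) (G : {pred L}) := {
  gm_car :> zmodType;
  gm_act : L -> gm_car -> gm_car;
  gm_act1 : forall m, gm_act 1 m = m;
  gm_actM : forall x y m, x \in G -> y \in G ->
              gm_act (x * y) m = gm_act x (gm_act y m);
  gm_actDl : forall x y m, x \in G -> y \in G ->
              gm_act (x + y) m = gm_act x m + gm_act y m;
  gm_actDr : forall x m m', x \in G ->
              gm_act x (m + m') = gm_act x m + gm_act x m'
}.

Definition gmod_iso (L : fieldExtType rat) (G : {pred L}) (X Y : GMod G) : Prop :=
  exists f : X -> Y, bijective f /\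
    (forall m m', f (m + m') = f m + f m') /\
    (forall x m, x \in G -> f (gm_act x m) = gm_act x (f m)).

(* O' = Z[z O_K] = Z + z O_K, as a predicate on the type of K. *)
Definition Oprime (L : fieldExtType rat) (K : {subfield L}) (z : nat)
  (a : subvs_of K) : Prop :=
  exists (k : int) (b : subvs_of K),
    ring_of_integers b /\ a = k%:~R + z%:R * b.

(* O_K^n is modelled as the
   subgroup of row vectors 'rV[K]_n with all entries in O_K. *)
Definition in_J (L : fieldExtType rat) (G : {pred L}) (K : {subfield L})
  (phi : {rmorphism subvs_of K -> L}) (z n : nat) (X : GMod G) : Prop :=
  exists f : X -> 'rV[subvs_of K]_n,
    [/\ injective f,
        (forall v : 'rV[subvs_of K]_n,
            (forall i, ring_of_integers (v 0 i)) <-> exists m, f m = v),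
        (forall m m', f (m + m') = f m + f m') &
        (forall a m, Oprime z a -> f (gm_act (phi a) m) = a *: f m)].

Definition frac_ideal (L : fieldExtType rat) (G : {pred L}) (I : L -> Prop) : Prop :=
  [/\ I 0,
      (forall x y, I x -> I y -> I (x + y)),
      (forall g x, g \in G -> I x -> I (g * x)),
      (exists x, x != 0 /\ I x) &
      exists x, x != 0 /\ forall y, I y -> x * y \in G].

Definition frac_equiv (L : fieldExtType rat) (I I' : L -> Prop) : Prop :=
  exists x : L, x != 0 /\ forall y, I' y <-> exists w, I w /\ y = x * w.

From HB Require Import structures.
From mathcomp Require Import all_boot all_order all_algebra all_field.
From Stdlib Require Import ClassicalEpsilon.
Set Implicit Arguments. Unset Strict Implicit. Unset Printing Implicit Defensive.
Import Order.TTheory GRing.Theory Num.Theory.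
Local Open Scope ring_scope.

(* A module X in J_phi is torsion free of Z-rank [L:Q]. Fixing m0 <> 0, the map
   g |-> g m0 is an additive injection of the full lattice Gamma into a Q-space
   of dimension [L:Q] containing X (namely K^n), so it extends to a Q-linear
   isomorphism T from L; composing X -> K^n with T^-1 embeds X Gamma-linearly
   into L. The image is a fractional ideal because z X is spanned over
   phi(z O_K) by the preimages of the standard basis of O_K^n, which have a
   common denominator. Finally, Gamma-linear maps between fractional ideals are
   multiplications by scalars, so isomorphic modules are exactly those with
   equivalent ideals. *)

Lemma morphD_zmod_morphism (U V : zmodType) (f : U -> V) :
  {morph f : x y / x + y} -> zmod_morphism f.
Proof.
move=> fD x y; have f0 : f 0 = 0 by apply: (addrI (f 0)); rewrite -fD !addr0.
by apply/eqP; rewrite eq_sym subr_eq -fD subrK.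
Qed.

Lemma lmod_mulrzI (V : lmodType rat) (e : int) :
  e != 0 -> injective (fun v : V => v *~ e).
Proof. by move=> e0 x y /=; rewrite -!scaler_int; apply: scalerI; rewrite intr_eq0. Qed.

Lemma lalg_intr_eq0 (A : lalgType rat) (k : int) : (k%:~R == 0 :> A) = (k == 0).
Proof. by rewrite -[k%:~R]scaler_int scaler_eq0 oner_eq0 orbF intr_eq0. Qed.

Section AdditiveIn.

Variables (U V : zmodType) (G : zmodClosed U) (u : U -> V).
Hypothesis uD : {in G &, {morph u : x y / x + y}}.

Lemma morphB_in : {in G &, {morph u : x y / x - y}}.
Proof. by move=> x y Gx Gy /=; apply/eqP; rewrite eq_sym subr_eq -uD ?rpredB ?subrK. Qed.

Lemma morphMz_in g (k : int) : g \in G -> u (g *~ k) = u g *~ k.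
Proof.
move=> Gg; have ugB : zmod_morphism (fun k : int => u (g *~ k)).
  by move=> a b; rewrite /= mulrzBr morphB_in ?rpredMz.
pose ug : {additive int -> V} :=
  HB.pack (fun k : int => u (g *~ k)) (GRing.isZmodMorphism.Build _ _ _ ugB).
by have := raddfMz ug k 1; rewrite /= intz mulr1z.
Qed.

End AdditiveIn.

Section LatticeExtension.

Variables (L V : vectType rat) (G : zmodClosed L) (u : L -> V).
Hypothesis G_full : forall l : L, exists d : int, (d != 0) && (l *~ d \in G).
Hypothesis uD : {in G &, {morph u : x y / x + y}}.
Hypothesis u_inj : {in G, forall g, u g = 0 -> g = 0}.
Hypothesis dimVL : (\dim {:V} <= \dim {:L})%N.

Let uB := morphB_in uD.
Let uMz := morphMz_in uD.

Let den l := xchoose (G_full l).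
Let den_neq0 l : den l != 0. Proof. by have /andP[] := xchooseP (G_full l). Qed.
Let den_mem l : l *~ den l \in G. Proof. by have /andP[] := xchooseP (G_full l). Qed.

Let T l := (den l)%:~R^-1 *: u (l *~ den l).

Let TE l e : e != 0 -> l *~ e \in G -> u (l *~ e) = T l *~ e.
Proof.
move=> e0 Gle; apply: (lmod_mulrzI (den_neq0 l)) => /=.
rewrite -uMz // -mulrzA mulrC mulrzA uMz //.
by rewrite /T -mulrzA mulrC mulrzA scalerMzl -mulrzr mulVf ?scale1r ?intr_eq0.
Qed.

Let T_zmod_morphism : zmod_morphism T.
Proof.
move=> x y; pose d := den x * den y.
have d0 : d != 0 by rewrite mulf_neq0.
have E : (x - y) *~ d = x *~ den x *~ den y - y *~ den y *~ den x.
  by rewrite mulrzBl -!mulrzA [den y * _]mulrC.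
have Gx : x *~ den x *~ den y \in G by rewrite rpredMz.
have Gy : y *~ den y *~ den x \in G by rewrite rpredMz.
have Gxy : (x - y) *~ d \in G by rewrite E rpredB.
apply: (lmod_mulrzI d0); rewrite -TE // E uB //.
rewrite (uMz _ (den_mem x)) (uMz _ (den_mem y)) !TE //.
by rewrite -!mulrzA [den y * _]mulrC mulrzBl.
Qed.

Let Tlin : {linear L -> V} :=
  HB.pack T (GRing.isZmodMorphism.Build _ _ _ T_zmod_morphism)
            (GRing.isScalable.Build _ _ _ _ T (rat_linear T_zmod_morphism)).

Lemma lattice_embedding_extends :
  exists T : 'Hom(L, V), [/\ {in G, T =1 u}, lker T == 0%VS & limg T = fullv].
Proof.
have Tu : {in G, T =1 u} by move=> g Gg; rewrite -[g]mulr1z TE ?mulr1z.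
have T_inj : injective Tlin.
  apply: raddf_inj => l /= Tl0.
  apply: (lmod_mulrzI (den_neq0 l)); rewrite /= mul0rz.
  by apply: u_inj => //; rewrite TE // Tl0 mul0rz.
have T_ker0 : lker (linfun Tlin) == 0%VS.
  by apply/lker0P => x y; rewrite !lfunE; apply: T_inj.
exists (linfun Tlin); split=> //; first by move=> g Gg; rewrite lfunE; apply: Tu.
apply/eqP; rewrite eqEdim subvf limg_dim_eq ?(eqP T_ker0) ?capv0 //.
Qed.

End LatticeExtension.

Lemma ring_of_integers_int (L : fieldExtType rat) (K : {subfield L}) (k : int) :
  ring_of_integers (k%:~R : subvs_of K).
Proof.
exists ('X - k%:P); split; first exact: monicXsubC.
by rewrite map_polyXsubC hornerXsubC /= subrr.
Qed.

Definition range (A B : Type) (f : A -> B) : B -> Prop := fun b => exists a, f a = b.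

Section Order.

Variables (L : fieldExtType rat) (G : {pred L}).
Hypothesis G_order : is_order G.

Lemma order_subring_closed : subring_closed G.
Proof. by case: G_order => G1 GB GM _; split. Qed.

HB.instance Definition _ := GRing.isSubringClosed.Build L G order_subring_closed.

Lemma order_denominator l : exists d : int, (d != 0) && (l *~ d \in G).
Proof.
case: G_order => _ _ _ [s [Gs spanG]].
have s_G (i : 'I_(size s)) : s`_i \in G.
  apply/Gs; exists (fun j => (j == i)%:R); rewrite (bigD1 i) //= big1 => [|j /negbTE ->].
    by rewrite eqxx mulr1z addr0.
  by rewrite mulr0z.
have l_span : l \in <<in_tuple s>>%VS by rewrite /= spanG memvf.
rewrite (coord_span l_span).
apply: (big_ind (fun x => exists d : int, (d != 0) && (x *~ d \in G))).
- by exists 1; rewrite mul0rz rpred0.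
- move=> x y [dx /andP[dx0 Gx]] [dy /andP[dy0 Gy]]; exists (dx * dy).
  rewrite mulf_neq0 //= mulrzDl mulrzA [dx * dy]mulrC mulrzA.
  by apply: rpredD; apply: rpredMz.
- move=> i _; exists (denq (coord (in_tuple s) i l)); rewrite denq_neq0 /=.
  by rewrite scalerMzl -mulrzr -numqE scaler_int rpredMz // s_G.
Qed.

Lemma order_common_denominator (s : seq L) :
  exists2 d : int, d != 0 & {in s, forall l, l *~ d \in G}.
Proof.
elim: s => [|x s [d d0 s_G]]; first by exists 1.
have [e /andP[e0 Gx]] := order_denominator x.
exists (e * d) => [|l]; first by rewrite mulf_neq0.
rewrite inE => /predU1P[->|/s_G Gl]; first by rewrite mulrzA rpredMz.
by rewrite mulrC mulrzA rpredMz.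
Qed.

Section GModule.

Variable X : GMod G.

Lemma gm_act0r g : g \in G -> gm_act g (0 : X) = 0.
Proof. by move=> Gg; apply: (addrI (gm_act g 0)); rewrite -gm_actDr // !addr0. Qed.

Lemma gm_act_int (k : int) (m : X) : gm_act k%:~R m = m *~ k.
Proof.
have actD : {in G &, {morph (fun x => gm_act x m) : x y / x + y}}.
  by move=> x y Gx Gy; apply: gm_actDl.
by rewrite (morphMz_in actD) ?rpred1 ?gm_act1.
Qed.

Lemma gm_actMzr g (k : int) (m : X) : g \in G -> gm_act g (m *~ k) = gm_act g m *~ k.
Proof.
by move=> Gg; rewrite -!gm_act_int -!gm_actM ?rpred_int // mulrC.
Qed.

Definition gmod_embedding (psi : {additive X -> L}) : Prop :=
  injective psi /\ forall g m, g \in G -> psi (gm_act g m) = g * psi m.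

Definition ideal_embedding (psi : {additive X -> L}) : Prop :=
  gmod_embedding psi /\ frac_ideal G (range psi).

End GModule.

Section RankOne.

Variables (V : vectType rat) (X : GMod G) (w : {additive X -> V}).
Hypotheses (w_inj : injective w) (dimVL : (\dim {:V} <= \dim {:L})%N).
Variables (m0 : X) (m0_neq0 : m0 != 0).

Let u g := w (gm_act g m0).

Let uD : {in G &, {morph u : x y / x + y}}.
Proof. by move=> x y Gx Gy; rewrite /u gm_actDl ?raddfD. Qed.

Let u_inj : {in G, forall g, u g = 0 -> g = 0}.
Proof.
move=> g Gg /eqP; rewrite /u raddf_eq0 // => /eqP gm0.
have [//|g0] := eqVneq g 0; case/negP: m0_neq0.
have [d /andP[d0 Gd]] := order_denominator g^-1.
have : gm_act (g^-1 *~ d * g) m0 = gm_act (g^-1 *~ d) (gm_act g m0) by rewrite gm_actM.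
rewrite mulrzAl mulVf // gm_act_int gm0 gm_act0r // => /(congr1 w).
rewrite raddfMz raddf0 -scaler_int => /eqP.
by rewrite scaler_eq0 intr_eq0 (negbTE d0) raddf_eq0.
Qed.

Lemma gmod_embedding_exists : exists psi : {additive X -> L}, gmod_embedding psi.
Proof.
have [T [Tu /lker0P T_inj T_onto]] :=
  lattice_embedding_extends order_denominator uD u_inj dimVL.
pose psi : {additive X -> L} := (T^-1)%VF \o w.
have TK m : T (psi m) = w m by rewrite limg_lfunVK // T_onto memvf.
have T_act g l m : g \in G -> T l = w m -> T (g * l) = w (gm_act g m).
  move=> Gg Tl; have [d /andP[d0 Gld]] := order_denominator l.
  have E : gm_act (l *~ d) m0 = m *~ d.
    by apply: w_inj; rewrite raddfMz -Tl -raddfMz; apply/esym/Tu.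
  apply: (lmod_mulrzI d0); transitivity (T (g * (l *~ d))).
    by rewrite mulrzAr raddfMz.
  by rewrite Tu ?rpredM // /u gm_actM // E gm_actMzr // raddfMz.
exists psi; split=> [m m' /(congr1 T)|g m Gg]; first by rewrite !TK; apply: w_inj.
by apply: T_inj; rewrite TK (T_act _ _ m).
Qed.

End RankOne.

Section JModule.

Variables (K : {subfield L}) (phi : {rmorphism subvs_of K -> L}) (z n : nat).
Hypotheses (z_gt0 : (0 < z)%N) (dim_n : (n * \dim K)%N = \dim {:L}).
Hypothesis phi_zO : forall b, ring_of_integers b -> phi (z%:R * b) \in G.
Variables (X : GMod G) (f : {additive X -> 'rV[subvs_of K]_n}).
Hypothesis f_inj : injective f.
Hypothesis f_onto :
  forall v : 'rV_n, (forall i, ring_of_integers (v 0 i)) <-> exists m, f m = v.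
Hypothesis f_phi : forall a m, Oprime z a -> f (gm_act (phi a) m) = a *: f m.

Lemma J_basis : exists ms : 'I_n -> X, forall i, f (ms i) = 'e_i.
Proof.
have /fin_all_exists[ms f_ms] (i : 'I_n) : exists m, f m = 'e_i.
  by apply/f_onto => j; rewrite mxE; apply: (ring_of_integers_int K (_ : nat)).
by exists ms.
Qed.

Lemma J_neq0 : exists m0 : X, m0 != 0.
Proof.
have := adim_gt0 (aspacef L); rewrite -dim_n muln_gt0 => /andP[n_gt0 _].
have [ms f_ms] := J_basis; exists (ms (Ordinal n_gt0)).
apply: contra_neq (oner_neq0 (subvs_of K)) => ms0.
by have /rowP/(_ (Ordinal n_gt0)) := f_ms (Ordinal n_gt0); rewrite ms0 raddf0 !mxE !eqxx.
Qed.

Lemma J_spanned (ms : 'I_n -> X) : (forall i, f (ms i) = 'e_i) ->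
  forall m, m *+ z = \sum_i gm_act (phi (z%:R * f m 0 i)) (ms i).
Proof.
move=> f_ms m; apply: f_inj; rewrite raddf_sum raddfMn.
have /f_onto O_m : exists m', f m' = f m by exists m.
rewrite {1}(row_sum_delta (f m)) -scaler_nat scaler_sumr; apply: eq_bigr => i _.
rewrite f_phi ?f_ms ?scalerA //.
by exists 0, (f m 0 i); rewrite mulr0z add0r; split; first apply: O_m.
Qed.

Lemma J_frac_ideal (psi : {additive X -> L}) :
  gmod_embedding psi -> frac_ideal G (range psi).
Proof.
move=> [psi_inj psi_act]; split.
- by exists 0; rewrite raddf0.
- by move=> _ _ [m <-] [m' <-]; exists (m + m'); rewrite raddfD.
- by move=> g _ Gg [m <-]; exists (gm_act g m); rewrite psi_act.
- have [m0 m0_neq0] := J_neq0; exists (psi m0); split; last by exists m0.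
  by rewrite raddf_eq0.
have [ms f_ms] := J_basis.
have [d d0 Gd] := order_common_denominator [seq psi (ms i) | i <- enum 'I_n].
exists (d%:~R * z%:R); split.
  by rewrite mulf_neq0 ?lalg_intr_eq0 // pmulrn lalg_intr_eq0 -lt0n.
move=> _ [m <-]; rewrite -mulrA mulr_natl -raddfMn (J_spanned f_ms) raddf_sum.
have /f_onto O_m : exists m', f m' = f m by exists m.
rewrite mulr_sumr rpred_sum // => i _.
rewrite (psi_act _ _ (phi_zO (O_m i))) mulrCA mulrzl.
apply: rpredM; first exact: phi_zO.
by apply: Gd; apply: (map_f (fun j => psi (ms j))); rewrite mem_enum.
Qed.

Lemma J_ideal_embedding : exists psi : {additive X -> L}, ideal_embedding psi.
Proof.
(* K^n as a Q-space: row vectors over K only carry a K-space structure. *)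
pose V := {ffun 'I_n -> subvs_of K}.
have wB : zmod_morphism (fun m => [ffun i => f m 0 i] : V).
  by move=> m m'; apply/ffunP => i; rewrite !ffunE raddfB !mxE.
pose w : {additive X -> V} :=
  HB.pack (fun m => [ffun i => f m 0 i] : V) (GRing.isZmodMorphism.Build _ _ _ wB).
have w_inj : injective w.
  by move=> m m' /ffunP w_eq; apply/f_inj/rowP => i; have := w_eq i; rewrite !ffunE.
have dimVL : (\dim {:V} <= \dim {:L})%N by rewrite dimvf /dim /= card_ord dim_n.
have [m0 m0_neq0] := J_neq0.
have [psi psi_emb] := gmod_embedding_exists w_inj dimVL m0_neq0.
by exists psi; split; last exact: J_frac_ideal.
Qed.

End JModule.

Lemma gmod_iso_frac_equiv (X Y : GMod G)
    (psiX : {additive X -> L}) (psiY : {additive Y -> L}) :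
  gmod_embedding psiX -> gmod_embedding psiY -> frac_ideal G (range psiX) ->
  gmod_iso X Y -> frac_equiv (range psiX) (range psiY).
Proof.
move=> [psiX_inj psiX_act] [psiY_inj psiY_act] [_ _ _ [a [a0 [m1 Ea]]] [x [x0 xG]]].
subst a => - [h [[k hK kK] [hD h_act]]].
pose hA : {additive X -> Y} :=
  HB.pack h (GRing.isZmodMorphism.Build _ _ h (morphD_zmod_morphism hD)).
have h0 : h 0 = 0 := raddf0 hA.
have key m : psiY (h m) * psiX m1 = psiY (h m1) * psiX m.
  have G1 : x * psiX m1 \in G by apply: xG; exists m1.
  have G2 : x * psiX m \in G by apply: xG; exists m.
  have E : gm_act (x * psiX m1) m = gm_act (x * psiX m) m1.
    by apply: psiX_inj; rewrite !psiX_act // mulrAC.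
  have := congr1 (psiY \o h) E; rewrite /= !h_act // !psiY_act // => E2.
  by apply: (mulfI x0); rewrite ![_ * psiX _]mulrC !mulrA.
have c0 : psiY (h m1) / psiX m1 != 0.
  rewrite mulf_neq0 ?invr_eq0 //; apply: contraNneq a0 => /eqP.
  by rewrite raddf_eq0 // => /eqP hm1; rewrite -(hK m1) hm1 -h0 hK raddf0.
exists (psiY (h m1) / psiX m1); split=> // y; split.
- case=> m' <-; exists (psiX (k m')); split; first by exists (k m').
  by rewrite mulrAC -key mulfK // kK.
- by case=> _ [[m <-] ->]; exists (h m); rewrite mulrAC -key mulfK.
Qed.

Lemma frac_equiv_gmod_iso (X Y : GMod G)
    (psiX : {additive X -> L}) (psiY : {additive Y -> L}) :
  gmod_embedding psiX -> gmod_embedding psiY ->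
  frac_equiv (range psiX) (range psiY) -> gmod_iso X Y.
Proof.
move=> [psiX_inj psiX_act] [psiY_inj psiY_act] [c [c0 equivXY]].
have /choice[h hE] m : exists m', psiY m' = c * psiX m.
  by apply/equivXY; exists (psiX m); split=> //; exists m.
have /choice[k kE] m : exists m', psiX m' = c^-1 * psiY m.
  have [_ [[m' <-] ->]] : exists w, range psiX w /\ psiY m = c * w.
    by apply/equivXY; exists m.
  by exists m'; rewrite mulKf.
exists h; split; [exists k|split].
- by move=> m; apply: psiX_inj; rewrite kE hE mulKf.
- by move=> m; apply: psiY_inj; rewrite hE kE mulVKf.
- by move=> m m'; apply: psiY_inj; rewrite raddfD !hE raddfD mulrDr.
- by move=> g m Gg; apply: psiY_inj; rewrite psiY_act // !hE psiX_act // mulrCA.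
Qed.

End Order.

Theorem lemma10p6 (L : fieldExtType rat) (G : {pred L}) (K : {subfield L})
  (phi : {rmorphism subvs_of K -> L}) (z : nat) :
  is_order G ->
  (0 < z)%N ->
  (forall b : subvs_of K, ring_of_integers b -> phi (z%:R * b) \in G) ->
  exists F : GMod G -> (L -> Prop),
    (forall X : GMod G, in_J phi z (\dim_K {:L}) X -> frac_ideal G (F X)) /\
    (forall X Y : GMod G, in_J phi z (\dim_K {:L}) X ->
                          in_J phi z (\dim_K {:L}) Y ->
       (gmod_iso X Y <-> frac_equiv (F X) (F Y))).
Proof.
move=> G_order z_gt0 phi_zO.
pose psi (X : GMod G) :=
  epsilon (inhabits (null_fun L : {additive X -> L})) (@ideal_embedding _ _ X).
have psiP X : in_J phi z (\dim_K {:L}) X -> ideal_embedding (psi X).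
  move=> [f [f_inj f_onto fD f_phi]]; apply: epsilon_spec.
  pose fA : {additive X -> 'rV_(\dim_K {:L})} :=
    HB.pack f (GRing.isZmodMorphism.Build _ _ f (morphD_zmod_morphism fD)).
  have dim_n : (\dim_K {:L} * \dim K)%N = \dim {:L}.
    by rewrite divnK // field_dimS // subvf.
  exact: (J_ideal_embedding G_order z_gt0 dim_n phi_zO (f := fA) f_inj f_onto f_phi).
exists (fun X => range (psi X)); split=> [X /psiP[] //|X Y /psiP[embX idX] /psiP[embY _]].
by split; [apply: gmod_iso_frac_equiv | apply: frac_equiv_gmod_iso].
Qed.
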